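(* Let $\alpha,\beta\in[0,\pi/2]$ with $\alpha\neq\beta$ and $\alpha\neq\pi/2-\beta$. Define, in $\mathbb{C}^2\otimes\mathbb{C}^2$, $\ket{\phi^+_\theta}=\sin\theta\ket{00}+\cos\theta\ket{11}$, $\ket{\phi^-_\theta}=\cos\theta\ket{00}-\sin\theta\ket{11}$, $\ket{\psi^+_\theta}=\sin\theta\ket{01}+\cos\theta\ket{10}$, $\ket{\psi^-_\theta}=\cos\theta\ket{01}-\sin\theta\ket{10}$, and $\ket{a_1}=\ket{\phi^-_\alpha}$, $\ket{a_2}=\ket{\psi^-_\beta}$, $\ket{a_3}=\tfrac{1}{\sqrt2}(\ket{\phi^+_\alpha}+\ket{\psi^+_\beta})$, $\ket{a_4}=\tfrac{1}{\sqrt2}(\ket{\phi^+_\alpha}-\ket{\psi^+_\beta})$. Then for every choice of $i\neq j$ in $\{1,2,3,4\}$, the projector onto the two-dimensional subspace $\mathrm{Span}\{\ket{a_i},\ket{a_j}\}$ is entangled (i.e., not separable).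
   Context: $\{\ket{0},\ket{1}\}$ is the computational basis of $\mathbb{C}^2$ and $\ket{ab}=\ket{a}\otimes\ket{b}$. A positive operator on $\mathbb{C}^2\otimes\mathbb{C}^2$ is separable if it is a nonnegative combination of product operators $A\otimes B$ with $A,B\ge0$, and entangled otherwise. The states $\ket{a_1},\dots,\ket{a_4}$ form an orthonormal basis (the set $\mathcal{A}_{\pi/4}^{[\alpha,\beta]}$ in the paper). *)

From HB Require Import structures.
From mathcomp Require Import all_boot all_order all_algebra.
From mathcomp Require Import complex mxtens.
From mathcomp Require Import reals trigo.
Set Implicit Arguments. Unset Strict Implicit. Unset Printing Implicit Defensive.
Import Order.TTheory GRing.Theory Num.Theory.
Local Open Scope ring_scope.
Local Open Scope complex_scope.

Section Defs.
Variable R : realType.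
Local Notation C := R[i].

Definition adj {m n} (A : 'M[C]_(m, n)) : 'M[C]_(n, m) :=
  \matrix_(i, j) (A j i)^*.

Definition hermitian {n} (A : 'M[C]_n) : Prop := adj A = A.

Definition psd {n} (A : 'M[C]_n) : Prop :=
  hermitian A /\ forall v : 'cV[C]_n, 0 <= (adj v *m A *m v) 0 0.

Definition separable (P : 'M[C]_(2 * 2)) : Prop :=
  exists (k : nat) (c : 'I_k -> R) (A B : 'I_k -> 'M[C]_2),
    (forall l, 0 <= c l /\ psd (A l) /\ psd (B l)) /\
    P = \sum_(l < k) (c l)%:C *: (A l *t B l).

Definition entangled (P : 'M[C]_(2 * 2)) : Prop := psd P /\ ~ separable P.

Definition ket (a : 'I_2) : 'cV[C]_2 := delta_mx a 0.
Definition ket2 (a b : 'I_2) : 'cV[C]_(2 * 2) := ket a *t ket b.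

Definition o0 : 'I_2 := ord0.
Definition o1 : 'I_2 := ord_max.

Definition phi_p (t : R) : 'cV[C]_(2 * 2) :=
  (sin t)%:C *: ket2 o0 o0 + (cos t)%:C *: ket2 o1 o1.
Definition phi_m (t : R) : 'cV[C]_(2 * 2) :=
  (cos t)%:C *: ket2 o0 o0 - (sin t)%:C *: ket2 o1 o1.
Definition psi_p (t : R) : 'cV[C]_(2 * 2) :=
  (sin t)%:C *: ket2 o0 o1 + (cos t)%:C *: ket2 o1 o0.
Definition psi_m (t : R) : 'cV[C]_(2 * 2) :=
  (cos t)%:C *: ket2 o0 o1 - (sin t)%:C *: ket2 o1 o0.

(* the basis A_{pi/4}^{[alpha,beta]} ; index 0,1,2,3 stands for a_1..a_4 *)
Definition avec (al be : R) (k : 'I_4) : 'cV[C]_(2 * 2) :=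
  let s := (Num.sqrt 2)^-1%:C in
  match val k with
  | 0 => phi_m al
  | 1 => psi_m be
  | 2 => s *: (phi_p al + psi_p be)
  | _ => s *: (phi_p al - psi_p be)
  end.

(* P is the (orthogonal) projector onto the column space spanned by the
   columns of V : Hermitian, idempotent, with column space equal to that of V
   (column spaces expressed via row spaces of transposes). *)
Definition projector_onto {n m} (P : 'M[C]_n) (V : 'M[C]_(n, m)) : Prop :=
  hermitian P /\ P *m P = P /\ (P^T :=: V^T)%MS.

End Defs.

(* By the Peres-Horodecki criterion a separable operator has a positive partial
   transpose: the partial transpose of A (x) B is A (x) B^T, whose quadratic form
   at the vectorisation of V is tr (A M) with M = V B V^* positive, and
   tr (A M) >= 0 for positive 2 x 2 matrices A, M.  So it suffices to make the
   partial transpose of the projector |a_i><a_i| + |a_j><a_j| negative somewhere.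
   The a_k are real; writing a real vector v as its 2 x 2 coefficient matrix V,
   the form of the partial transpose of u u^T at v is
   tr ((V U^T)^2) = <V, U>^2 - 2 det V det U.  Let p = sin alpha cos alpha and
   q = sin beta cos beta; the hypotheses give p <> q and 4 p q < 1.  For the pairs
   {a_1, a_2} and {a_3, a_4} the form is indefinite on the diagonal or on the
   antidiagonal matrices, since p <> q.  For the other pairs it equals
   -2 (det U + det W) det V on the span of the two remaining basis vectors, where
   det U + det W = -+ (p + q) / 2 <> 0 and det is indefinite since 4 p q < 1. *)

From HB Require Import structures.
From mathcomp Require Import all_boot all_order all_algebra.
From mathcomp Require Import complex mxtens.
From mathcomp Require Import reals trigo.
From mathcomp Require Import ring lra.
From Pilot Require Import Defs.
Set Implicit Arguments. Unset Strict Implicit. Unset Printing Implicit Defensive.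
Import Order.TTheory GRing.Theory Num.Theory.
Local Open Scope ring_scope.
Local Open Scope complex_scope.

Lemma ord2_cases (i : 'I_2) : i = o0 \/ i = o1.
Proof. by case: i => [[|[|//]] ?]; [left | right]; apply: val_inj. Qed.

Lemma sum_ord2 (V : nmodType) (F : 'I_2 -> V) : \sum_(i < 2) F i = F o0 + F o1.
Proof. by rewrite big_ord_recr big_ord1; congr (F _ + _); apply: val_inj. Qed.

Section Adjoint.
Variable R : realType.
Local Notation C := R[i].

Lemma adjK m n (A : 'M[C]_(m, n)) : adj (adj A) = A.
Proof. by apply/matrixP => i j; rewrite !mxE conjcK. Qed.

Lemma adj_mul m n p (A : 'M[C]_(m, n)) (B : 'M[C]_(n, p)) :
  adj (A *m B) = adj B *m adj A.
Proof.
apply/matrixP => i j; rewrite !mxE rmorph_sum; apply: eq_bigr => k _.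
by rewrite !mxE rmorphM mulrC.
Qed.

Lemma adj_row_mx m (u w : 'cV[C]_m) : adj (row_mx u w) = col_mx (adj u) (adj w).
Proof. by apply/matrixP => i j; rewrite !mxE; case: (split i) => k; rewrite !mxE. Qed.

Definition qform n (v : 'cV[C]_n) (X : 'M[C]_n) : C := (adj v *m X *m v) 0 0.

Lemma qform_is_linear n (v : 'cV[C]_n) : linear (qform v).
Proof. by move=> a X Y; rewrite /qform mulmxDr mulmxDl -scalemxAr -scalemxAl !mxE. Qed.

HB.instance Definition _ n (v : 'cV[C]_n) :=
  GRing.isLinear.Build C 'M[C]_n C *%R (qform v) (qform_is_linear v).

Lemma psd_projector n (P : 'M[C]_n) : Defs.hermitian P -> P *m P = P -> psd P.
Proof.
move=> hP idP; split=> // v; rewrite -/(qform v P).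
have -> : qform v P = qform (P *m v) 1%:M.
  by rewrite /qform mulmx1 adj_mul hP mulmxA -(mulmxA (adj v) P P) idP.
rewrite /qform mulmx1 mxE; apply: sumr_ge0 => k _; rewrite !mxE.
by rewrite mulrC -sqr_normc exprn_ge0.
Qed.

End Adjoint.

Section PartialTranspose.
Variables (K : pzRingType) (m n : nat).

(* Transpose on the second tensor factor:
   ptrans X at ((a, b), (c, d)) is X at ((a, d), (c, b)). *)
Definition ptrans (X : 'M[K]_(m * n)) : 'M[K]_(m * n) :=
  \matrix_(x, y)
    X (mxtens_index ((mxtens_unindex x).1, (mxtens_unindex y).2))
      (mxtens_index ((mxtens_unindex y).1, (mxtens_unindex x).2)).

Lemma ptrans_is_linear : linear ptrans.
Proof. by move=> a X Y; apply/matrixP => x y; rewrite !mxE. Qed.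

HB.instance Definition _ :=
  GRing.isLinear.Build K 'M[K]_(m * n) 'M[K]_(m * n) *:%R ptrans ptrans_is_linear.

Lemma ptrans_tens (A : 'M[K]_m) (B : 'M[K]_n) : ptrans (A *t B) = A *t B^T.
Proof. by apply/matrixP => x y; rewrite !mxE !mxtens_indexK. Qed.

Lemma sum_mxtens (F : 'I_(m * n) -> K) :
  \sum_x F x = \sum_a \sum_b F (mxtens_index (a, b)).
Proof.
rewrite pair_big (reindex (@mxtens_index m n)) /=; last first.
  by exists (@mxtens_unindex m n) => x _; rewrite (mxtens_indexK, mxtens_unindexK).
by apply: eq_bigr => -[a b].
Qed.

End PartialTranspose.

Section Vectorization.
Variable R : realType.
Local Notation C := R[i].
Variables m n : nat.

Definition vect (V : 'M[C]_(m, n)) : 'cV[C]_(m * n) :=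
  \col_x V (mxtens_unindex x).1 (mxtens_unindex x).2.

Lemma vectE V a b : vect V (mxtens_index (a, b)) 0 = V a b.
Proof. by rewrite mxE mxtens_indexK. Qed.

Lemma qform_vectE (V : 'M[C]_(m, n)) X :
  qform (vect V) X = \sum_a \sum_b \sum_c \sum_d
    (V a b)^* * X (mxtens_index (a, b)) (mxtens_index (c, d)) * V c d.
Proof.
rewrite /qform mxE sum_mxtens.
under eq_bigr => c _ do under eq_bigr => d _ do
  rewrite vectE mxE sum_mxtens mulr_suml.
under eq_bigr => c _ do under eq_bigr => d _ do under eq_bigr => a _ do
  rewrite mulr_suml.
under eq_bigr => c _ do rewrite exchange_big.
rewrite exchange_big.
under eq_bigr => a _ do under eq_bigr => c _ do rewrite exchange_big.
under eq_bigr => a _ do rewrite exchange_big.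
apply: eq_bigr => a _; apply: eq_bigr => b _; apply: eq_bigr => c _.
by apply: eq_bigr => d _; rewrite mxE vectE.
Qed.

Lemma qform_vect_tens_trmx (V : 'M[C]_(m, n)) (A : 'M[C]_m) (B : 'M[C]_n) :
  qform (vect V) (A *t B^T) = \tr (A *m (V *m B *m adj V)).
Proof.
rewrite qform_vectE /mxtrace.
under [RHS]eq_bigr => a _ do
  (rewrite mxE; under eq_bigr => c _ do rewrite mxE mulr_sumr).
under [RHS]eq_bigr => a _ do rewrite exchange_big.
apply: eq_bigr => a _; apply: eq_bigr => b _; apply: eq_bigr => c _.
rewrite !mxE mulr_suml mulr_sumr; apply: eq_bigr => d _.
by rewrite tensmxE mxE; ring.
Qed.

Lemma qform_vect_ptrans_rank1 (U V : 'M[C]_(m, n)) :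
  qform (vect V) (ptrans (vect U *m adj (vect U))) =
  \tr (map_mx conjc (V *m U^T) *m (V *m U^T)).
Proof.
rewrite qform_vectE /mxtrace.
under [RHS]eq_bigr => a _ do
  (rewrite mxE; under eq_bigr => c _ do rewrite !mxE rmorph_sum mulr_suml).
under [RHS]eq_bigr => a _ do rewrite exchange_big.
apply: eq_bigr => a _; apply: eq_bigr => b _; apply: eq_bigr => c _.
rewrite mulr_sumr; apply: eq_bigr => d _.
by rewrite !mxE !mxtens_indexK /= big_ord1 !mxE !mxtens_indexK rmorphM; ring.
Qed.

End Vectorization.

Section PPT.
Variable R : realType.
Local Notation C := R[i].

Lemma psd_congr m n (W : 'M[C]_(m, n)) (B : 'M[C]_n) :
  psd B -> psd (W *m B *m adj W).
Proof.
case=> hB B_ge0; split; first by rewrite /Defs.hermitian !adj_mul adjK hB mulmxA.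
move=> v; rewrite -/(qform v _).
have -> : qform v (W *m B *m adj W) = qform (adj W *m v) B.
  by rewrite /qform adj_mul adjK !mulmxA.
exact: B_ge0.
Qed.

Definition col2 (x y : C) : 'cV[C]_2 := \col_i (if i == o0 then x else y).

Lemma qform_col2 (A : 'M[C]_2) x y : qform (col2 x y) A =
  x^* * A o0 o0 * x + x^* * A o0 o1 * y + y^* * A o1 o0 * x + y^* * A o1 o1 * y.
Proof. by rewrite /qform !mxE !sum_ord2 !mxE !sum_ord2 !mxE /=; ring. Qed.

Lemma psd2_entries (A : 'M[C]_2) : psd A -> exists a d p q : R,
  [/\ A o0 o0 = a%:C, A o1 o1 = d%:C, A o0 o1 = p +i* q & A o1 o0 = p -i* q] /\
  [/\ 0 <= a, 0 <= d & p ^+ 2 + q ^+ 2 <= a * d].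
Proof.
case=> _ A_ge0.
have form_ge0 x y : 0 <= x^* * A o0 o0 * x + x^* * A o0 o1 * y
                  + y^* * A o1 o0 * x + y^* * A o1 o1 * y.
  by rewrite -qform_col2; exact: A_ge0.
move: (A o0 o0) (A o0 o1) (A o1 o0) (A o1 o1) form_ge0 => [a a'] [p q] [p' q'] [d d'] form_ge0.
(* The test vectors (1, 0), (0, 1), (1, 1) and (1, i) show that A is hermitian with
   real diagonal; with b = p + i q, the vectors (d, -b^* ), (-b, a) and (1, -b^* )
   then give d det A >= 0, a det A >= 0 and a + (d - 2) |b|^2 >= 0. *)
have := form_ge0 1 0; simpc => /andP [/eqP a'0 a_ge0]; subst a'.
have := form_ge0 0 1; simpc => /andP [/eqP d'0 d_ge0]; subst d'.
have := form_ge0 1 1; simpc => /andP [/eqP e11 _].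
have := form_ge0 1 (0 +i* 1); simpc => /andP [/eqP e1i _].
have p'E : p' = p by lra.
have q'E : q' = - q by lra.
subst p' q'.
have := form_ge0 d%:C ((- p) +i* q); simpc => /andP [_ hd].
have := form_ge0 ((- p) +i* (- q)) a%:C; simpc => /andP [_ ha].
have := form_ge0 1 ((- p) +i* q); simpc => /andP [_ h1].
exists a, d, p, q; split; first by split; rewrite // opprK.
split=> //; rewrite -subr_ge0.
have d_det : 0 <= d * (a * d - (p ^+ 2 + q ^+ 2)) by lra.
have a_det : 0 <= a * (a * d - (p ^+ 2 + q ^+ 2)) by lra.
have [a_gt0|a_le0] := ltP 0 a; first by rewrite -(pmulr_rge0 _ a_gt0).
have [d_gt0|d_le0] := ltP 0 d; first by rewrite -(pmulr_rge0 _ d_gt0).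
have -> : a = 0 by lra.
have -> : d = 0 by lra.
by move: h1; nra.
Qed.

Lemma tr_mul_psd2 (A B : 'M[C]_2) : psd A -> psd B -> 0 <= \tr (A *m B).
Proof.
move=> /psd2_entries [a [d [p [q [[A00 A11 A01 A10] [a_ge0 d_ge0 pq_le]]]]]].
move=> /psd2_entries [a' [d' [p' [q' [[B00 B11 B01 B10] [a'_ge0 d'_ge0 pq'_le]]]]]].
rewrite /mxtrace sum_ord2 !mxE !sum_ord2 A00 A11 A01 A10 B00 B11 B01 B10; simpc.
apply/andP; split; first by apply/eqP; ring.
have cs : (p * p' + q * q') ^+ 2 <= (p ^+ 2 + q ^+ 2) * (p' ^+ 2 + q' ^+ 2).
  by have := sqr_ge0 (p * q' - q * p'); nra.
have det_le : (p ^+ 2 + q ^+ 2) * (p' ^+ 2 + q' ^+ 2) <= (a * d) * (a' * d').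
  by apply: ler_pM; rewrite ?addr_ge0 ?sqr_ge0.
have amgm : 4 * ((a * d) * (a' * d')) <= (a * a' + d * d') ^+ 2.
  by have := sqr_ge0 (a * a' - d * d'); nra.
have diag_ge0 : 0 <= a * a' + d * d' by rewrite addr_ge0 ?mulr_ge0.
have : (2 * (p * p' + q * q')) ^+ 2 <= (a * a' + d * d') ^+ 2 by nra.
nra.
Qed.

Lemma separable_ptrans_ge0 (P : 'M[C]_(2 * 2)) :
  separable P -> forall V : 'M[C]_2, 0 <= qform (vect V) (ptrans P).
Proof.
case=> k [c [A [B [hAB ->]]]] V; rewrite !linear_sum; apply: sumr_ge0 => l _.
have [c_ge0 [psdA psdB]] := hAB l.
rewrite !linearZ /= ptrans_tens qform_vect_tens_trmx.
by rewrite mulr_ge0 ?ler0c // tr_mul_psd2 //; exact: psd_congr.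
Qed.

End PPT.

Section Projectors.
Variable R : realType.
Local Notation C := R[i].

Lemma projector_onto_id n m (P : 'M[C]_n) (V : 'M[C]_(n, m)) (x : 'cV[C]_n) :
  projector_onto P V -> (x^T <= V^T)%MS -> P *m x = x.
Proof.
case=> _ [idP eqPV]; rewrite -eqPV => /submxP [D hD].
have -> : x = P *m D^T by rewrite -[x]trmxK hD trmx_mul trmxK.
by rewrite mulmxA idP.
Qed.

Lemma projector_onto_orth n m (P : 'M[C]_n) (V : 'M[C]_(n, m)) (x : 'cV[C]_n) :
  projector_onto P V -> adj V *m x = 0 -> P *m x = 0.
Proof.
case=> hP [_ eqPV] Vx0.
have /submxP [E hE] : (P^T <= V^T)%MS by rewrite eqPV.
have PE : P = V *m E^T by rewrite -[P]trmxK hE trmx_mul trmxK.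
by rewrite -hP PE adj_mul -mulmxA Vx0 mulmx0.
Qed.

Section OrthonormalBasis.
Variables (n : nat) (a : 'I_n -> 'cV[C]_n).
Hypothesis a_orthonormal : forall k l, (adj (a k) *m a l) 0 0 = (k == l)%:R.

Lemma sum_orthonormal_basis : \sum_k a k *m adj (a k) = 1%:M.
Proof.
pose M : 'M[C]_n := \matrix_(z, k) a k z 0.
have MM : adj M *m M = 1%:M.
  apply/matrixP => k l; rewrite [RHS]mxE -a_orthonormal !mxE.
  by apply: eq_bigr => z _; rewrite !mxE.
apply/matrixP => x y; rewrite -(mulmx1C MM) !mxE summxE.
by apply: eq_bigr => k _; rewrite !mxE big_ord1 !mxE.
Qed.

Lemma projector_onto_pairE (i j : 'I_n) (P : 'M[C]_n) :
  i != j -> projector_onto P (row_mx (a i) (a j)) ->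
  P = a i *m adj (a i) + a j *m adj (a j).
Proof.
move=> ij hPV.
have Pa k : P *m a k = if (k == i) || (k == j) then a k else 0.
  case: ifP => [/orP kij | /negbT].
    apply: projector_onto_id hPV _; rewrite tr_row_mx -addsmxE.
    by case: kij => /eqP ->; [exact: addsmxSl | exact: addsmxSr].
  rewrite negb_or => /andP [ki kj]; apply: projector_onto_orth hPV _.
  have orth l : l != k -> adj (a l) *m a k = 0.
    by move=> lk; apply/matrixP => p q; rewrite !ord1 a_orthonormal mxE (negbTE lk).
  by rewrite adj_row_mx mul_col_mx !orth ?col_mx0 // eq_sym.
rewrite -[P]mulmx1 -sum_orthonormal_basis mulmx_sumr.
under eq_bigr => k _ do rewrite mulmxA Pa.
rewrite (bigD1 i) //= (bigD1 j) 1?eq_sym //= big1 ?addr0 => [|k /andP [ki kj]].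
  by rewrite !eqxx orbT.
by rewrite (negbTE ki) (negbTE kj) mul0mx.
Qed.

End OrthonormalBasis.

End Projectors.

Section RealVectors.
Variable R : realType.
Local Notation C := R[i].
Variables m n : nat.

Definition cvect (U : 'M[R]_(m, n)) : 'cV[C]_(m * n) := vect (map_mx (real_complex R) U).

Lemma cvectD U W : cvect (U + W) = cvect U + cvect W.
Proof. by apply/matrixP => x y; rewrite !mxE rmorphD. Qed.

Lemma cvectN U : cvect (- U) = - cvect U.
Proof. by apply/matrixP => x y; rewrite !mxE rmorphN. Qed.

Lemma cvectZ c U : cvect (c *: U) = c%:C *: cvect U.
Proof. by apply/matrixP => x y; rewrite !mxE rmorphM. Qed.

Lemma adj_cvect_mul (U W : 'M[R]_(m, n)) :
  (adj (cvect U) *m cvect W) 0 0 = (\tr (U *m W^T))%:C.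
Proof.
rewrite /cvect mxE sum_mxtens /mxtrace rmorph_sum; apply: eq_bigr => a _.
rewrite mxE rmorph_sum; apply: eq_bigr => b _.
by rewrite [adj _ _ _]mxE !vectE !mxE conjc_real rmorphM.
Qed.

Lemma qform_cvect_ptrans_rank1 (U V : 'M[R]_(m, n)) :
  qform (cvect V) (ptrans (cvect U *m adj (cvect U))) =
  (\tr ((V *m U^T) *m (V *m U^T)))%:C.
Proof.
rewrite /cvect qform_vect_ptrans_rank1 map_trmx -(map_mxM _ V).
rewrite /mxtrace rmorph_sum; apply: eq_bigr => a _.
rewrite mxE [in RHS]mxE rmorph_sum; apply: eq_bigr => c _.
by rewrite !mxE conjc_real rmorphM.
Qed.

End RealVectors.

Section TwoByTwo.
Variable K : comNzRingType.

Lemma det_mx2 (M : 'M[K]_2) : \det M = M o0 o0 * M o1 o1 - M o0 o1 * M o1 o0.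
Proof.
rewrite (expand_det_row _ o0) sum_ord2 /cofactor !det_mx11 !mxE /=.
have -> : lift o0 0 = o1 by apply: val_inj.
have -> : lift o1 0 = o0 by apply: val_inj.
by rewrite expr0 expr1; ring.
Qed.

Lemma mxtrace_mx2 (M : 'M[K]_2) : \tr M = M o0 o0 + M o1 o1.
Proof. by rewrite /mxtrace sum_ord2. Qed.

Definition mx22 (a b c d : K) : 'M[K]_2 :=
  \matrix_(i, j) if i == o0 then (if j == o0 then a else b) else (if j == o0 then c else d).

Lemma add_mx22 a b c d a' b' c' d' :
  mx22 a b c d + mx22 a' b' c' d' = mx22 (a + a') (b + b') (c + c') (d + d').
Proof. by apply/matrixP => i j; rewrite !mxE; case: eqP; case: eqP. Qed.

Lemma opp_mx22 a b c d : - mx22 a b c d = mx22 (- a) (- b) (- c) (- d).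
Proof. by apply/matrixP => i j; rewrite !mxE; case: eqP; case: eqP. Qed.

Lemma scale_mx22 x a b c d : x *: mx22 a b c d = mx22 (x * a) (x * b) (x * c) (x * d).
Proof. by apply/matrixP => i j; rewrite !mxE; case: eqP; case: eqP. Qed.

Lemma det_mx22 a b c d : \det (mx22 a b c d) = a * d - b * c.
Proof. by rewrite det_mx2 !mxE. Qed.

Lemma mxtrace_mx22_mul_tr a b c d a' b' c' d' :
  \tr (mx22 a b c d *m (mx22 a' b' c' d')^T) = a * a' + b * b' + c * c' + d * d'.
Proof. by rewrite mxtrace_mx2 !mxE !sum_ord2 !mxE /=; ring. Qed.

Lemma mxtrace_sqr_mx2 (M : 'M[K]_2) : \tr (M *m M) = \tr M ^+ 2 - 2 * \det M.
Proof. by rewrite !mxtrace_mx2 det_mx2 !mxE !sum_ord2; ring. Qed.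

(* The quadratic form at vect V of the partial transpose of u u^T + w w^T, where
   u, w are the vectorisations of U, W (see qform_cvect_ptrans_pair). *)
Definition ptrans_form (U W V : 'M[K]_2) : K :=
  \tr ((V *m U^T) *m (V *m U^T)) + \tr ((V *m W^T) *m (V *m W^T)).

Lemma ptrans_formE U W V : ptrans_form U W V =
  \tr (V *m U^T) ^+ 2 + \tr (V *m W^T) ^+ 2 - 2 * \det V * (\det U + \det W).
Proof. by rewrite /ptrans_form !mxtrace_sqr_mx2 !det_mulmx !det_tr; ring. Qed.

Lemma ptrans_formZ c U W V :
  ptrans_form (c *: U) (c *: W) V = c ^+ 2 * ptrans_form U W V.
Proof. by rewrite /ptrans_form !linearZ /= -!scalemxAl !mxtraceZ; ring. Qed.

Lemma ptrans_formC U W V : ptrans_form U W V = ptrans_form W U V.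
Proof. exact: addrC. Qed.

Lemma ptrans_form_plane U W V1 V2 y z :
  ptrans_form U W (y *: V1 + z *: V2) =
  ptrans_form U W V1 * y ^+ 2
  + (ptrans_form U W (V1 + V2) - ptrans_form U W V1 - ptrans_form U W V2) * y * z
  + ptrans_form U W V2 * z ^+ 2.
Proof.
rewrite /ptrans_form !mulmxDl -!scalemxAl.
move: (V1 *m U^T) (V2 *m U^T) (V1 *m W^T) (V2 *m W^T) => A B A' B'.
by rewrite !mxtrace_mx2 !mxE !sum_ord2 !mxE; ring.
Qed.

End TwoByTwo.

Section Indefinite.
Variable F : realFieldType.

Lemma quad_form_neg (A B C : F) :
  4 * A * C < B ^+ 2 -> exists y z : F, A * y ^+ 2 + B * y * z + C * z ^+ 2 < 0.
Proof.
move=> disc.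
have [A_lt0|A_ge0] := ltP A 0; first by exists 1, 0; rewrite !expr2; lra.
have [C_lt0|C_ge0] := ltP C 0; first by exists 0, 1; rewrite !expr2; lra.
have [A0|A_neq0] := eqVneq A 0.
  have B_neq0 : B != 0 by apply: contraTneq disc => ->; rewrite A0 mulr0 mul0r expr0n ltxx.
  exists (- (C + 1) / B), 1.
  rewrite A0 expr1n !mulr1 mul0r add0r mulrC divfK //; lra.
have A_gt0 : 0 < A by rewrite lt_def A_neq0.
by exists (- B), (2 * A); nra.
Qed.

Lemma ptrans_form_neg_of_discr (U W V1 V2 : 'M[F]_2) :
  4 * ptrans_form U W V1 * ptrans_form U W V2 <
    (ptrans_form U W (V1 + V2) - ptrans_form U W V1 - ptrans_form U W V2) ^+ 2 ->
  exists V, ptrans_form U W V < 0.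
Proof.
move=> /quad_form_neg [y [z neg]]; exists (y *: V1 + z *: V2).
by rewrite ptrans_form_plane.
Qed.

Lemma ptrans_form_neg_of_orth (U W V1 V2 : 'M[F]_2) :
  \tr (V1 *m U^T) = 0 -> \tr (V1 *m W^T) = 0 ->
  \tr (V2 *m U^T) = 0 -> \tr (V2 *m W^T) = 0 ->
  \det U + \det W != 0 ->
  4 * \det V1 * \det V2 < (\det (V1 + V2) - \det V1 - \det V2) ^+ 2 ->
  exists V, ptrans_form U W V < 0.
Proof.
move=> V1U V1W V2U V2W D_neq0 disc; apply: (ptrans_form_neg_of_discr (V1 := V1) (V2 := V2)).
set D := \det U + \det W.
have QE (V : 'M[F]_2) : \tr (V *m U^T) = 0 -> \tr (V *m W^T) = 0 ->
    ptrans_form U W V = - 2 * D * \det V.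
  by move=> VU VW; rewrite ptrans_formE VU VW /D; ring.
rewrite !QE ?mulmxDl ?mxtraceD ?V1U ?V1W ?V2U ?V2W ?addr0 //.
have D2_gt0 : 0 < 4 * D ^+ 2 by rewrite mulr_gt0 // exprn_even_gt0.
set d := \det (V1 + V2); set d1 := \det V1; set d2 := \det V2.
have -> : 4 * (-2 * D * d1) * (-2 * D * d2) = 4 * D ^+ 2 * (4 * d1 * d2) by ring.
have -> : (-2 * D * d - -2 * D * d1 - -2 * D * d2) ^+ 2 =
          4 * D ^+ 2 * (d - d1 - d2) ^+ 2 by ring.
by rewrite ltr_pM2l.
Qed.

End Indefinite.

Section QuarterCircle.
Variable F : realFieldType.

Definition quarter_circle (s c : F) := [/\ 0 <= s, 0 <= c & s ^+ 2 + c ^+ 2 = 1].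

Lemma sqr_cos2_sub_sin2 (s c : F) :
  s ^+ 2 + c ^+ 2 = 1 -> (c ^+ 2 - s ^+ 2) ^+ 2 = 1 - 4 * (s * c) ^+ 2.
Proof.
move=> unit; have -> : (c ^+ 2 - s ^+ 2) ^+ 2 = (s ^+ 2 + c ^+ 2) ^+ 2 - 4 * (s * c) ^+ 2.
  by ring.
by rewrite unit expr1n.
Qed.

Lemma quarter_circle_mul_neq (sa ca sb cb : F) :
  quarter_circle sa ca -> quarter_circle sb cb -> ca != cb -> ca != sb ->
  sa * ca != sb * cb.
Proof.
case=> sa_ge0 ca_ge0 a_unit [sb_ge0 cb_ge0 b_unit] ca_neq_cb ca_neq_sb.
apply/eqP => pq.
have : (sa + ca) ^+ 2 = (sb + cb) ^+ 2.
  have -> : (sa + ca) ^+ 2 = sa ^+ 2 + ca ^+ 2 + 2 * (sa * ca) by ring.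
  have -> : (sb + cb) ^+ 2 = sb ^+ 2 + cb ^+ 2 + 2 * (sb * cb) by ring.
  by rewrite a_unit b_unit pq.
move/eqP; rewrite eqf_sqr => /orP [/eqP sum_eq | /eqP sum_opp]; last first.
  have sa0 : sa = 0 by lra.
  have ca0 : ca = 0 by lra.
  by move: a_unit; rewrite sa0 ca0 expr0n add0r => /eqP; rewrite eq_sym oner_eq0.
have : (ca - sa) ^+ 2 = (cb - sb) ^+ 2.
  have -> : (ca - sa) ^+ 2 = sa ^+ 2 + ca ^+ 2 - 2 * (sa * ca) by ring.
  have -> : (cb - sb) ^+ 2 = sb ^+ 2 + cb ^+ 2 - 2 * (sb * cb) by ring.
  by rewrite a_unit b_unit pq.
move/eqP; rewrite eqf_sqr => /orP [] /eqP diff_eq.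
  by move/eqP: ca_neq_cb; apply; lra.
by move/eqP: ca_neq_sb; apply; lra.
Qed.

Lemma quarter_circle_mul_lt (sa ca sb cb : F) :
  quarter_circle sa ca -> quarter_circle sb cb -> ca != cb ->
  4 * (sa * ca) * (sb * cb) < 1.
Proof.
case=> sa_ge0 ca_ge0 a_unit [sb_ge0 cb_ge0 b_unit] ca_neq_cb.
have p_le : 2 * (sa * ca) <= 1 by rewrite -a_unit; have := sqr_ge0 (sa - ca); nra.
have q_le : 2 * (sb * cb) <= 1 by rewrite -b_unit; have := sqr_ge0 (sb - cb); nra.
have p_ge0 : 0 <= sa * ca by rewrite mulr_ge0.
have q_ge0 : 0 <= sb * cb by rewrite mulr_ge0.
rewrite ltNge; apply/negP => pq_ge.
have p_eq : 2 * (sa * ca) = 1 by nra.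
have q_eq : 2 * (sb * cb) = 1 by nra.
have sa_ca : sa = ca.
  apply/eqP; rewrite -subr_eq0 -sqrf_eq0; apply/eqP; nra.
have sb_cb : sb = cb.
  apply/eqP; rewrite -subr_eq0 -sqrf_eq0; apply/eqP; nra.
have sqr_eq : ca ^+ 2 = cb ^+ 2 by move: a_unit b_unit; rewrite sa_ca sb_cb; lra.
move/eqP: sqr_eq; rewrite eqf_sqr (negbTE ca_neq_cb) /= => /eqP ca_opp.
by move/eqP: ca_neq_cb; apply; lra.
Qed.

End QuarterCircle.

Section Coefficients.
Variable R : realType.

Lemma cvect_delta (a b : 'I_2) : cvect (delta_mx a b) = ket2 R a b.
Proof.
have ord1_eq0 (i : 'I_1) : i == 0 by rewrite ord1.
apply/matrixP => x y; rewrite !mxE !ord1_eq0 !andbT.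
by rewrite rmorph_nat -natrM mulnb.
Qed.

Lemma cvect_mx22 (a b c d : R) : cvect (mx22 a b c d) =
  a%:C *: ket2 R o0 o0 + b%:C *: ket2 R o0 o1 + c%:C *: ket2 R o1 o0 + d%:C *: ket2 R o1 o1.
Proof.
have -> : mx22 a b c d = a *: delta_mx o0 o0 + b *: delta_mx o0 o1
                         + c *: delta_mx o1 o0 + d *: delta_mx o1 o1.
  apply/matrixP => i j.
  by case: (ord2_cases i) => ->; case: (ord2_cases j) => ->; rewrite !mxE /=; ring.
by rewrite !cvectD !cvectZ !cvect_delta.
Qed.

Definition phi_p_mx (t : R) := mx22 (sin t) 0 0 (cos t).
Definition phi_m_mx (t : R) := mx22 (cos t) 0 0 (- sin t).
Definition psi_p_mx (t : R) := mx22 0 (sin t) (cos t) 0.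
Definition psi_m_mx (t : R) := mx22 0 (cos t) (- sin t) 0.

Definition avec_mx (al be : R) (k : 'I_4) : 'M[R]_2 :=
  let s := (Num.sqrt 2)^-1 in
  match val k with
  | 0 => phi_m_mx al
  | 1 => psi_m_mx be
  | 2 => s *: (phi_p_mx al + psi_p_mx be)
  | _ => s *: (phi_p_mx al - psi_p_mx be)
  end.

Lemma avecE al be k : avec al be k = cvect (avec_mx al be k).
Proof.
have cvect_phi_p t : cvect (phi_p_mx t) = phi_p t.
  by rewrite cvect_mx22 rmorph0 !scale0r !addr0.
have cvect_phi_m t : cvect (phi_m_mx t) = phi_m t.
  by rewrite cvect_mx22 rmorph0 rmorphN scaleNr !scale0r !addr0.
have cvect_psi_p t : cvect (psi_p_mx t) = psi_p t.
  by rewrite cvect_mx22 rmorph0 !scale0r add0r addr0.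
have cvect_psi_m t : cvect (psi_m_mx t) = psi_m t.
  by rewrite cvect_mx22 rmorph0 rmorphN scaleNr !scale0r add0r addr0.
rewrite /avec /avec_mx; case: (val k) => [|[|[|?]]];
  by rewrite ?cvectZ ?cvectD ?cvectN ?cvect_phi_p ?cvect_phi_m ?cvect_psi_p ?cvect_psi_m.
Qed.

Lemma sqr_sqrt2_inv : (Num.sqrt 2)^-1 ^+ 2 = 2^-1 :> R.
Proof. by rewrite exprVn sqr_sqrtr ?ler0n. Qed.

Lemma avec_mx_orthonormal al be k l :
  \tr (avec_mx al be k *m (avec_mx al be l)^T) = (k == l)%:R.
Proof.
have a_unit := cos2Dsin2 al; have b_unit := cos2Dsin2 be.
have s2 := sqr_sqrt2_inv.
case: k l => [[|[|[|[|//]]]] ?] [[|[|[|[|//]]]] ?];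
  rewrite /avec_mx /phi_p_mx /phi_m_mx /psi_p_mx /psi_m_mx /= ?opp_mx22 ?add_mx22 ?scale_mx22;
  rewrite mxtrace_mx22_mul_tr; nra.
Qed.

End Coefficients.

Section Witnesses.
Variables (R : realType) (al be : R).
Local Notation sa := (sin al).
Local Notation ca := (cos al).
Local Notation sb := (sin be).
Local Notation cb := (cos be).
Local Notation s := ((Num.sqrt 2)^-1 : R).
Local Notation A k := (avec_mx al be (@Ordinal 4 k isT)).
Local Notation orth k l := (avec_mx_orthonormal al be (@Ordinal 4 k isT) (@Ordinal 4 l isT)).

Local Ltac mx22_simpl :=
  rewrite /avec_mx /phi_p_mx /phi_m_mx /psi_p_mx /psi_m_mx /=
    ?opp_mx22 ?add_mx22 ?scale_mx22 ?ptrans_formE ?det_mx22 ?mxtrace_mx22_mul_tr.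

Lemma ptrans_form_avec_mx01_neg :
  0 <= sa * ca -> 0 <= sb * cb -> sa * ca != sb * cb ->
  exists V, ptrans_form (A 0) (A 1) V < 0.
Proof.
move=> p_ge0 q_ge0; case: ltgtP => // [p_lt_q | q_lt_p] _.
  apply: (ptrans_form_neg_of_discr (V1 := mx22 1 0 0 0) (V2 := mx22 0 0 0 1)).
  by mx22_simpl; nra.
apply: (ptrans_form_neg_of_discr (V1 := mx22 0 1 0 0) (V2 := mx22 0 0 1 0)).
by mx22_simpl; nra.
Qed.

Lemma ptrans_form_avec_mx23_neg :
  0 <= sa * ca -> 0 <= sb * cb -> sa * ca != sb * cb ->
  exists V, ptrans_form (A 2) (A 3) V < 0.
Proof.
move=> p_ge0 q_ge0 p_neq_q.
suff [V V_neg] : exists V,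
    ptrans_form (phi_p_mx al + psi_p_mx be) (phi_p_mx al - psi_p_mx be) V < 0.
  by exists V; rewrite /avec_mx /= ptrans_formZ sqr_sqrt2_inv pmulr_rlt0 // invr_gt0 ltr0n.
case: ltgtP p_neq_q => // [p_lt_q | q_lt_p] _.
  apply: (ptrans_form_neg_of_discr (V1 := mx22 1 0 0 0) (V2 := mx22 0 0 0 1)).
  by mx22_simpl; nra.
apply: (ptrans_form_neg_of_discr (V1 := mx22 0 1 0 0) (V2 := mx22 0 0 1 0)).
by mx22_simpl; nra.
Qed.

Lemma ptrans_form_avec_mx_cross_neg (i j : 'I_4) :
  0 <= sa * ca -> 0 <= sb * cb -> sa * ca != sb * cb -> 4 * (sa * ca) * (sb * cb) < 1 ->
  (i < 2 <= j)%N -> exists V, ptrans_form (avec_mx al be i) (avec_mx al be j) V < 0.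
Proof.
move=> p_ge0 q_ge0 p_neq_q pq_lt1.
have s2 := sqr_sqrt2_inv R.
have s_neq0 : s != 0 by rewrite invr_eq0 sqrtr_eq0 -ltNge ltr0n.
have unscale (V U : 'M[R]_2) : \tr ((s *: V) *m U^T) = 0 -> \tr (V *m U^T) = 0.
  by rewrite -scalemxAl mxtraceZ => /eqP; rewrite mulf_eq0 (negbTE s_neq0) => /eqP.
have Ea := sqr_cos2_sub_sin2 (cos2Dsin2 al).
have Eb := sqr_cos2_sub_sin2 (cos2Dsin2 be).
have pq_gt0 : 0 < sa * ca + sb * cb.
  rewrite lt0r addr_ge0 // andbT paddr_eq0 //.
  by apply: contra p_neq_q => /andP [/eqP -> /eqP ->].
(* The plane is spanned by the two basis vectors outside the pair, the one among
   a_3, a_4 taken without its factor 1 / sqrt 2. *)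
case: i j => [[|[|//]] ?] [[|[|[|[|//]]]] ?] //= _.
- apply: (ptrans_form_neg_of_orth (V1 := A 1) (V2 := phi_p_mx al - psi_p_mx be)
    (orth 1 0) (orth 1 2) (unscale _ _ (orth 3 0)) (unscale _ _ (orth 3 2))).
    by rewrite detZ s2; mx22_simpl; apply: ltr0_neq0; lra.
  by mx22_simpl; lra.
- apply: (ptrans_form_neg_of_orth (V1 := A 1) (V2 := phi_p_mx al + psi_p_mx be)
    (orth 1 0) (orth 1 3) (unscale _ _ (orth 2 0)) (unscale _ _ (orth 2 3))).
    by rewrite detZ s2; mx22_simpl; apply: ltr0_neq0; lra.
  by mx22_simpl; lra.
- apply: (ptrans_form_neg_of_orth (V1 := A 0) (V2 := phi_p_mx al - psi_p_mx be)
    (orth 0 1) (orth 0 2) (unscale _ _ (orth 3 1)) (unscale _ _ (orth 3 2))).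
    by rewrite detZ s2; mx22_simpl; apply: lt0r_neq0; lra.
  by mx22_simpl; lra.
apply: (ptrans_form_neg_of_orth (V1 := A 0) (V2 := phi_p_mx al + psi_p_mx be)
  (orth 0 1) (orth 0 3) (unscale _ _ (orth 2 1)) (unscale _ _ (orth 2 3))).
  by rewrite detZ s2; mx22_simpl; apply: lt0r_neq0; lra.
by mx22_simpl; lra.
Qed.

Lemma ptrans_form_avec_mx_neg_lt (i j : 'I_4) :
  0 <= sa * ca -> 0 <= sb * cb -> sa * ca != sb * cb -> 4 * (sa * ca) * (sb * cb) < 1 ->
  (i < j)%N -> exists V, ptrans_form (avec_mx al be i) (avec_mx al be j) V < 0.
Proof.
move=> p_ge0 q_ge0 p_neq_q pq_lt1 ij.
have [i_lt2 | i_ge2] := ltnP i 2; have [j_lt2 | j_ge2] := ltnP j 2.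
- move: i j ij i_lt2 j_lt2 => [[|[|//]] ?] [[|[|//]] ?] //= _ _ _.
  exact: ptrans_form_avec_mx01_neg.
- by apply: ptrans_form_avec_mx_cross_neg; rewrite ?i_lt2.
- by move: (leq_trans ij j_lt2); rewrite ltnNge ltnW.
move: i j ij i_ge2 j_ge2 => [[|[|[|[|//]]]] ?] [[|[|[|[|//]]]] ?] //= _ _ _.
exact: ptrans_form_avec_mx23_neg.
Qed.

End Witnesses.

Section Angles.
Variable R : realType.

Lemma quarter_circle_sin_cos (x : R) : 0 <= x <= pi / 2 -> quarter_circle (sin x) (cos x).
Proof.
move=> /andP [x_ge0 x_le]; have pi_gt0 := pi_gt0 R.
split; last by rewrite addrC cos2Dsin2.
  by apply: sin_ge0_pi; rewrite x_ge0 (le_trans x_le) // ler_pdivrMr // ler_peMr ?ler1n // ltW.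
by apply: cos_ge0_pihalf; rewrite x_le andbT (le_trans _ x_ge0) // oppr_le0 divr_ge0 // ltW.
Qed.

Lemma cos_inj_quarter (x y : R) :
  0 <= x <= pi / 2 -> 0 <= y <= pi / 2 -> cos x = cos y -> x = y.
Proof.
have pi_half_le : pi / 2 <= pi :> R.
  by rewrite ler_pdivrMr // ler_peMr ?ler1n // ltW // pi_gt0.
move=> /andP [x_ge0 x_le] /andP [y_ge0 y_le]; apply: cos_inj; rewrite in_itv /=.
  by rewrite x_ge0 (le_trans x_le).
by rewrite y_ge0 (le_trans y_le).
Qed.

End Angles.

Section Entanglement.
Variables (R : realType) (al be : R).

Lemma ptrans_form_avec_mx_neg (i j : 'I_4) :
  quarter_circle (sin al) (cos al) -> quarter_circle (sin be) (cos be) ->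
  cos al != cos be -> cos al != sin be ->
  i != j -> exists V, ptrans_form (avec_mx al be i) (avec_mx al be j) V < 0.
Proof.
move=> a_quarter b_quarter ca_neq_cb ca_neq_sb ij.
have [[sa_ge0 ca_ge0 _] [sb_ge0 cb_ge0 _]] := (a_quarter, b_quarter).
have neg_lt := ptrans_form_avec_mx_neg_lt (mulr_ge0 sa_ge0 ca_ge0) (mulr_ge0 sb_ge0 cb_ge0)
  (quarter_circle_mul_neq a_quarter b_quarter ca_neq_cb ca_neq_sb)
  (quarter_circle_mul_lt a_quarter b_quarter ca_neq_cb).
case: (ltngtP i j) ij => [/neg_lt //|/neg_lt [V V_neg] _|/val_inj ->]; last by rewrite eqxx.
by exists V; rewrite ptrans_formC.
Qed.

Lemma avec_orthonormal k l : (adj (avec al be k) *m avec al be l) 0 0 = (k == l)%:R.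
Proof. by rewrite !avecE adj_cvect_mul avec_mx_orthonormal rmorph_nat. Qed.

Lemma qform_cvect_ptrans_pair (U W V : 'M[R]_2) :
  qform (cvect V) (ptrans (cvect U *m adj (cvect U) + cvect W *m adj (cvect W))) =
  (ptrans_form U W V)%:C.
Proof. by rewrite linearD linearD /= !qform_cvect_ptrans_rank1 rmorphD. Qed.

End Entanglement.

Theorem proposition1 (R : realType) (al be : R) :
  0 <= al <= pi / 2 -> 0 <= be <= pi / 2 ->
  al != be -> al != pi / 2 - be ->
  forall (i j : 'I_4), i != j ->
  forall P : 'M[R[i]]_(2 * 2),
    projector_onto P (row_mx (avec al be i) (avec al be j)) ->
    entangled P.
Proof.
move=> hal hbe al_neq_be al_neq_be' i j ij P hP.
have [hP_herm [hP_idem _]] := hP.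
split; first exact: psd_projector.
move=> /separable_ptrans_ge0 P_ppt.
have ca_neq_cb : cos al != cos be.
  by apply: contra_neq al_neq_be; exact: cos_inj_quarter.
have ca_neq_sb : cos al != sin be.
  apply: contra_neq al_neq_be' => ca_sb; apply: cos_inj_quarter => //.
  - by rewrite subr_ge0 (andP hbe).2 /= lerBlDr lerDl (andP hbe).1.
  - by rewrite ca_sb cosB cos_pihalf sin_pihalf mul0r add0r mul1r.
have [V V_neg] := ptrans_form_avec_mx_neg (quarter_circle_sin_cos hal)
  (quarter_circle_sin_cos hbe) ca_neq_cb ca_neq_sb ij.
have := P_ppt (map_mx (real_complex R) V).
rewrite (projector_onto_pairE (avec_orthonormal al be) ij hP) !avecE.
by rewrite -/(cvect V) qform_cvect_ptrans_pair ler0c real_leNgt ?V_neg // num_real.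
Qed.
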